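(* Let $C$ be a supersingular curve of genus $g$ over $\mathbb{F}_q$, and write its normalized Weil numbers as $\zeta_{k_1}^{t_1},\ldots,\zeta_{k_{2g}}^{t_{2g}}$, where $\zeta_k=e^{2\pi i/k}$, $k_j\geq 1$, and $\gcd(k_j,t_j)=1$ for each $j$. Let $r$ be a positive integer. Then $C$ is maximal over $\mathbb{F}_{q^r}$ if and only if (i) there exist an integer $s\geq 1$ and odd integers $b_1,\ldots,b_{2g}$ such that $k_j=2^s b_j$ for all $1\le j\le 2g$ (with the same $s$ for all $j$), and (ii) $r$ is an odd multiple of $2^{s-1}\operatorname{lcm}(b_1,\ldots,b_{2g})$.
   Context: For a smooth projective curve $C$ of genus $g$ over $\mathbb{F}_q$, the zeta function is $Z(C/\mathbb{F}_q,T)=\exp\big(\sum_{s\ge1} \#C(\mathbb{F}_{q^s})T^s/s\big)=\frac{L(T)}{(1-T)(1-qT)}$ with $L(T)=\prod_{i=1}^{2g}(1-\alpha_iT)\in\mathbb{Z}[T]$, $|\alpha_i|=\sqrt q$. The normalized Weil numbers of $C/\mathbb{F}_q$ are $\alpha_i/\sqrt q$; those of $C/\mathbb{F}_{q^r}$ are their $r$-th powers. $C$ is supersingular if all normalized Weil numbers are roots of unity. $C$ is maximal over $\mathbb{F}_{Q}$ if $\#C(\mathbb{F}_Q)=1+Q+2g\sqrt{Q}$, which holds if and only if all normalized Weil numbers of $C/\mathbb{F}_Q$ equal $-1$. *)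

From HB Require Import structures.
From mathcomp Require Import all_boot all_order all_algebra all_field.
Set Implicit Arguments. Unset Strict Implicit. Unset Printing Implicit Defensive.
Import Order.TTheory GRing.Theory Num.Theory.
Local Open Scope ring_scope.

(* A curve C of genus g over F_q is represented through its Weil data:
   the reciprocal roots alpha_1..alpha_{2g} of L(T) (in algC) and its
   point-count function N s = #C(F_{q^s}). *)

Definition prime_power (q : nat) : Prop :=
  exists p e : nat, [/\ prime p, (0 < e)%N & q = (p ^ e)%N].

Definition weil_numbers (q g : nat) (alpha : 'I_(2 * g) -> algC) : Prop :=
  (\prod_(i < 2 * g) (1 - alpha i *: 'X) \is a polyOver Num.int) /\
  (forall i, `|alpha i| = sqrtC (q%:R)).

(* Z(C/F_q, T) = exp(sum_s N s T^s / s) = L(T)/((1-T)(1-qT)), i.e.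
   N s = 1 + q^s - sum_i alpha_i^s for all s >= 1. *)
Definition zeta_counts (q g : nat) (alpha : 'I_(2 * g) -> algC) (N : nat -> nat) : Prop :=
  forall s : nat, (0 < s)%N ->
    (N s)%:R = 1 + (q ^ s)%:R - \sum_(i < 2 * g) alpha i ^+ s :> algC.

Definition normalized (q g : nat) (alpha : 'I_(2 * g) -> algC) (i : 'I_(2 * g)) : algC :=
  alpha i / sqrtC (q%:R).

Definition supersingular (q g : nat) (alpha : 'I_(2 * g) -> algC) : Prop :=
  forall i, exists n : nat, (0 < n)%N /\ normalized q alpha i ^+ n = 1.

(* zeta_k = e^{2 pi i / k}: k.-root (-1) is the k-th root of -1 with
   minimal nonnegative argument, namely e^{i pi / k}. *)
Definition zeta (k : nat) : algC := (k.-root (-1)) ^+ 2.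

Definition maximal_over (q g : nat) (N : nat -> nat) (r : nat) : Prop :=
  (N r)%:R = 1 + (q ^ r)%:R + (2 * g)%:R * sqrtC ((q ^ r)%:R) :> algC.

(* The normalized Weil numbers w_j have modulus 1 and #C(F_{q^r}) = 1 + q^r - q^(r/2) sum_j w_j^r,
   so C is maximal over F_{q^r} iff sum_j w_j^r = -2g, i.e. (equality case of the triangle
   inequality) iff w_j^r = -1 for every j.  As w_j is a primitive k_j-th root of unity, this means
   k_j | 2r but not k_j | r; writing k_j = 2^a_j b_j and r = 2^v o with b_j, o odd, it says
   a_j = v + 1 and b_j | o for all j, which is (i) and (ii).
   The one non-formal point is that zeta_k is a primitive k-th root of unity, i.e. that y = k.-root (-1)
   has order 2k.  By definition y maximizes the real part among the k-th roots of -1 in the closed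
   upper half plane.  If y had order 2k' < 2k, then k = m k' with m >= 3 odd and y^k' = -1, so every
   m-th root of y is again a k-th root of -1, and one of them has larger real part than y. *)

From HB Require Import structures.
From mathcomp Require Import all_boot all_order all_algebra all_field.
From mathcomp Require Import ring zify.
Import Order.TTheory GRing.Theory Num.Theory.

Lemma dvdn_pow2_odd a b v o : odd b -> odd o ->
  (2 ^ a * b %| 2 ^ v * o) = (a <= v) && (b %| o).
Proof.
move=> b_odd o_odd; rewrite Gauss_dvd ?coprimeXl ?coprime2n //.
rewrite Gauss_dvdl ?coprimeXl ?coprime2n // dvdn_Pexp2l //.
by rewrite Gauss_dvdr // coprime_sym coprimeXl ?coprime2n.
Qed.

Lemma dvdn_double_ndvdn a b v o : odd b -> odd o ->
  (2 ^ a * b %| 2 * (2 ^ v * o)) && ~~ (2 ^ a * b %| 2 ^ v * o) = (a == v.+1) && (b %| o).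
Proof.
move=> b_odd o_odd; rewrite mulnA -expnS !dvdn_pow2_odd //.
by case: (b %| o); rewrite ?andbF // !andbT -ltnNge -eqn_leq.
Qed.

Lemma partn2_decomp [n] : 0 < n -> odd n`_2^' /\ n = 2 ^ logn 2 n * n`_2^'.
Proof. by move=> n_gt0; rewrite odd_2'nat part_pnat -p_part partnC. Qed.

Lemma odd_biglcm n (b : 'I_n -> nat) : (forall j, odd (b j)) -> odd (\big[lcmn/1]_(j < n) b j).
Proof.
move=> b_odd; apply: (big_ind odd) => // x y x_odd y_odd.
by apply: (@dvdn_odd _ (x * y)); rewrite ?oddM ?x_odd // -muln_lcm_gcd dvdn_mulr.
Qed.

Lemma double_ndvdn_split [d k] : 0 < k -> (d %| 2 * k) && ~~ (d %| k) ->
  exists k' m, [/\ odd m, d = 2 * k' & k = m * k'].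
Proof.
move=> k_gt0 dk; have d_gt0 : 0 < d by case/andP: dk => /dvdn_gt0-> //; rewrite muln_gt0.
have [b_odd dE] := partn2_decomp d_gt0; have [o_odd kE] := partn2_decomp k_gt0.
move: dk; rewrite dE kE dvdn_double_ndvdn // => /andP[/eqP a_eq b_dvd].
exists (2 ^ logn 2 k * d`_2^'), (k`_2^' %/ d`_2^'); split.
- exact: dvdn_odd (dvdn_div b_dvd) o_odd.
- by rewrite a_eq expnS mulnA.
- by rewrite mulnCA divnK.
Qed.

Lemma double_ndvdn_family [n] [k : 'I_n -> nat] [r] : 0 < r -> (forall j, 0 < k j) ->
  (forall j, (k j %| 2 * r) && ~~ (k j %| r)) <->
  (exists s (b : 'I_n -> nat), [/\ 1 <= s, (forall j, odd (b j)), (forall j, k j = 2 ^ s * b j) &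
     exists m, odd m /\ r = m * (2 ^ (s - 1) * \big[lcmn/1]_(j < n) b j)]).
Proof.
move=> r_gt0 k_gt0; split => [k_cond | [s [b [s_gt0 b_odd kE [m [m_odd rE]]]]] j].
  have [o_odd rE] := partn2_decomp r_gt0.
  set v := logn 2 r in rE *; set o := r`_2^' in o_odd rE *.
  have k_part j : logn 2 (k j) = v.+1 /\ (k j)`_2^' %| o.
    have [kj_odd kjE] := partn2_decomp (k_gt0 j).
    by move: (k_cond j); rewrite [in X in X -> _]kjE rE dvdn_double_ndvdn // => /andP[/eqP-> ->].
  exists v.+1, (fun j => (k j)`_2^'); split => // [j|j|].
  - by have [] := partn2_decomp (k_gt0 j).
  - by have [_ {1}->] := partn2_decomp (k_gt0 j); rewrite (proj1 (k_part j)).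
  set L := \big[lcmn/1]_j _.
  have L_dvd : L %| o by apply/dvdn_biglcmP => j _; exact: (proj2 (k_part j)).
  exists (o %/ L); split; first exact: dvdn_odd (dvdn_div L_dvd) o_odd.
  by rewrite subSS subn0 {1}rE mulnCA divnK.
set L := \big[lcmn/1]_j _ in rE.
have -> : r = 2 ^ (s - 1) * (m * L) by rewrite rE mulnCA.
rewrite kE dvdn_double_ndvdn ?oddM ?m_odd ?odd_biglcm // subn1 prednK // eqxx /=.
by apply/dvdn_mull/(biglcmn_sup j).
Qed.

Local Open Scope ring_scope.

Lemma prim_rootV (R : fieldType) n (z : R) : n.-primitive_root z -> n.-primitive_root z^-1.
Proof.
move=> z_prim; have n_gt0 := prim_order_gt0 z_prim.
have -> : z^-1 = z ^+ n.-1.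
  have z_neq0 : z != 0 by rewrite (prim_root_eq0 z_prim) -lt0n.
  by apply: (mulIf z_neq0); rewrite mulVf // -exprSr prednK // (prim_expr_order z_prim).
by rewrite prim_root_exp_coprime // -{2}(prednK n_gt0) coprimenS.
Qed.

Lemma prim_root_exprz (R : fieldType) n (z : R) (t : int) :
  n.-primitive_root z -> coprimez n%:Z t -> n.-primitive_root (z ^ t).
Proof.
case: t => m z_prim co_nm; first by rewrite prim_root_exp_coprime // coprime_sym.
by apply: prim_rootV; rewrite prim_root_exp_coprime // coprime_sym.
Qed.

Lemma prim_root_expr_eqN1 [R : numDomainType] [n] [w : R] r : n.-primitive_root w ->
  (w ^+ r = -1) <-> (n %| 2 * r)%N && ~~ (n %| r)%N.
Proof.
have N1_neq1 : (-1 : R) != 1 by rewrite lt_eqF // (lt_trans (ltrN10 R) ltr01).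
move=> w_prim; rewrite !(prim_order_dvd w_prim) mulnC exprM.
split=> [-> | /andP[]]; first by rewrite sqrrN expr1n eqxx N1_neq1.
by rewrite sqrf_eq1 => /orP[/eqP-> /negP | /eqP].
Qed.

Lemma norm_expr_eq1 [R : numDomainType] [x : R] [n] : (0 < n)%N -> `|x ^+ n| = 1 -> `|x| = 1.
Proof. by move=> n_gt0; rewrite normrX => /eqP; rewrite pexpr_eq1 // => /eqP. Qed.

Lemma geom_sum_unity_root (R : idomainType) (x : R) n :
  x ^+ n = 1 -> x != 1 -> \sum_(i < n) x ^+ i = 0.
Proof.
move=> xn x_neq1; apply/eqP; move: (subrX1 x n); rewrite xn subrr => /esym/eqP.
by rewrite mulf_eq0 subr_eq0 (negPf x_neq1).
Qed.

Lemma normC_sub1_sqr (C : numClosedFieldType) (x : C) :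
  `|x| = 1 -> `|x - 1| ^+ 2 = 2 - 'Re x *+ 2.
Proof.
move=> x_norm; rewrite normCK rmorphB rmorph1 mulrBl !mulrBr -normCK x_norm.
by rewrite ReE; field.
Qed.

Lemma ler_normC_sub1 (C : numClosedFieldType) (z w : C) : `|z| = 1 -> `|w| = 1 ->
  (`|w - 1| <= `|z - 1|) = ('Re z <= 'Re w).
Proof.
move=> z_norm w_norm; rewrite -ler_sqr ?nnegrE // !normC_sub1_sqr // lerD2l lerN2.
by rewrite lerMn2r.
Qed.

Lemma Re_le_rootC [C : numClosedFieldType] [n] [x z : C] :
  (0 < n)%N -> x \is Num.real -> z ^+ n = x -> 'Re z <= 'Re (n.-root x).
Proof.
move=> n_gt0 x_real zx; have [Im_ge0 | Im_lt0] := real_ge0P (Creal_Im z).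
  exact: rootC_Re_max.
rewrite -Re_conj; apply: rootC_Re_max => //; first by rewrite -rmorphXn zx; apply: conj_Creal.
by rewrite Im_conj oppr_ge0 ltW.
Qed.

Lemma exists_root_Re_gt [m] [w : algC] : (1 < m)%N -> `|w| = 1 -> w != 1 ->
  exists2 z, z ^+ m = w & 'Re w < 'Re z.
Proof.
move=> m_gt1 w_norm w_neq1; have m_gt0 := ltnW m_gt1.
have [rho rho_prim] := C_prim_root_exists m_gt0.
pose z (a : 'I_m) := m.-root w * rho ^+ a.
have zE a : z a ^+ m = w.
  by rewrite exprMn rootCK // exprAC (prim_expr_order rho_prim) expr1n mulr1.
have z_norm a : `|z a| = 1 by apply: norm_expr_eq1 m_gt0 _; rewrite zE.
pose P (x : algC) := \sum_(i < m) x ^+ i.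
have zP a : (z a - 1) * P (z a) = w - 1 by rewrite -subrX1 zE.
have sumP : \sum_a P (z a) = \sum_(a < m) 1.
  rewrite exchange_big (bigD1 (Ordinal m_gt0)) //= [X in _ + X]big1 => [|i i_neq0].
    by rewrite addr0; apply: eq_bigr => a _; rewrite expr0.
  have rho_i_neq1 : rho ^+ i != 1.
    rewrite -(prim_order_dvd rho_prim) gtnNdvd // lt0n.
    by apply: contra i_neq0 => /eqP i0; apply/eqP/val_inj.
  under eq_bigr do rewrite /z exprMn exprAC.
  by rewrite -mulr_sumr geom_sum_unity_root ?mulr0 // exprAC (prim_expr_order rho_prim) expr1n.
(* Otherwise every P (z a) = (w - 1) / (z a - 1) has modulus at most 1; since they sum to m,
   they all equal 1, which forces all the z a to coincide. *)
have [a lt_wz | Re_le] := pickP (fun a => 'Re w < 'Re (z a)); first by exists (z a).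
have P_le1 a : `|P (z a)| <= 1.
  have za_neq1 : z a != 1 by apply: contraNneq w_neq1 => za1; rewrite -(zE a) za1 expr1n.
  have za1_gt0 : 0 < `|z a - 1| by rewrite normr_gt0 subr_eq0.
  rewrite -(ler_pM2l za1_gt0) mulr1 -normrM zP ler_normC_sub1 //.
  by rewrite real_leNgt ?Re_le ?Creal_Re.
have zw a : z a = w.
  move: (zP a); rewrite (normC_sum_upper (fun a _ => P_le1 a) sumP) // mulr1.
  by move/addIr.
have /eqP := zw (Ordinal m_gt0); rewrite -(zw (Ordinal m_gt1)) /z (inj_eq (mulfI _)).
  by rewrite (eq_prim_root_expr rho_prim) !modn_small.
by rewrite rootC_eq0 // -normr_eq0 w_norm oner_eq0.
Qed.

Lemma rootCN1_prim [k] : (0 < k)%N -> (2 * k).-primitive_root (k.-root (-1 : algC)).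
Proof.
move=> k_gt0; set y := k.-root (-1 : algC).
have yk : y ^+ k = -1 by rewrite rootCK.
have [d d_prim _] : {d | d.-primitive_root y & (d %| 2 * k)%N}.
  by apply: prim_order_exists; rewrite ?muln_gt0 // mulnC exprM yk sqrrN expr1n.
have [k' [m [m_odd dE kE]]] := double_ndvdn_split k_gt0 ((prim_root_expr_eqN1 k d_prim).1 yk).
have k'_gt0 : (0 < k')%N by move: k_gt0; rewrite kE muln_gt0 => /andP[].
suff m1 : m = 1%N by rewrite kE m1 mul1n -dE.
apply/eqP; apply: contraT => m_neq1.
have m_gt1 : (1 < m)%N by move: m_odd m_neq1; case: (m) => [|[|]].
have yk' : y ^+ k' = -1.
  by apply/(prim_root_expr_eqN1 _ d_prim); rewrite dE dvdnn gtnNdvd //; lia.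
have y_norm : `|y| = 1 by apply: (norm_expr_eq1 k_gt0); rewrite yk normrN1.
have y_neq1 : y != 1 by rewrite -[y]expr1 -(prim_order_dvd d_prim) dE dvdn1; lia.
have [z zm lt_yz] := exists_root_Re_gt m_gt1 y_norm y_neq1.
have zk : z ^+ k = -1 by rewrite kE exprM zm yk'.
by have := Re_le_rootC k_gt0 (rpredN1 _) zk; rewrite (lt_geF lt_yz).
Qed.

Lemma zeta_prim [k] : (0 < k)%N -> k.-primitive_root (zeta k).
Proof.
move=> k_gt0; have := exp_prim_root (rootCN1_prim k_gt0) 2.
by rewrite (gcdn_idPl (dvdn_mulr k (dvdnn 2))) mulKn.
Qed.

Lemma sumr_eqN_card (C : numClosedFieldType) (I : finType) (F : I -> C) :
  (forall i, `|F i| <= 1) -> \sum_i F i = - #|I|%:R <-> (forall i, F i = -1).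
Proof.
move=> F_le1; split=> [sumF i | F_N1]; last first.
  by rewrite (eq_bigr _ (fun i _ => F_N1 i)) sumr_const mulNrn.
apply: oppr_inj; rewrite (@normC_sum_upper _ _ predT (fun i => - F i) (fun=> 1)) ?opprK //.
  by move=> j _; rewrite normrN.
by rewrite sumrN sumF opprK sumr_const.
Qed.

Lemma normalized_norm q g (alpha : 'I_(2 * g) -> algC) j :
  (0 < q)%N -> weil_numbers q alpha -> `|normalized q alpha j| = 1.
Proof.
move=> q_gt0 [_ alpha_norm]; rewrite normrM normfV alpha_norm.
by rewrite ger0_norm ?sqrtC_ge0 ?ler0n // divff // sqrtC_eq0 pnatr_eq0 -lt0n.
Qed.

Lemma maximal_overE [q g] [alpha : 'I_(2 * g) -> algC] [N r] :
  (0 < q)%N -> (0 < r)%N -> zeta_counts q alpha N ->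
  maximal_over q g N r <-> \sum_j normalized q alpha j ^+ r = - (2 * g)%:R.
Proof.
move=> q_gt0 r_gt0 hN; set s := sqrtC (q%:R : algC).
have s_neq0 : s != 0 by rewrite sqrtC_eq0 pnatr_eq0 -lt0n.
have sqrt_qr : sqrtC ((q ^ r)%:R : algC) = s ^+ r by rewrite natrX rootCX // ler0n.
have sum_alpha : \sum_j alpha j ^+ r = (\sum_j normalized q alpha j ^+ r) * s ^+ r.
  by rewrite mulr_suml; apply: eq_bigr => j _; rewrite -exprMn divfK.
rewrite /maximal_over hN // sqrt_qr sum_alpha; split=> [/addrI | ->].
  by rewrite -mulNr => /(mulIf (expf_neq0 r s_neq0)) <-; rewrite opprK.
by rewrite mulNr opprK.
Qed.

Lemma maximal_over_exprN1 [q g] [alpha : 'I_(2 * g) -> algC] [N r] :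
  (0 < q)%N -> (0 < r)%N -> weil_numbers q alpha -> zeta_counts q alpha N ->
  maximal_over q g N r <-> forall j, normalized q alpha j ^+ r = -1.
Proof.
move=> q_gt0 r_gt0 hW hN; apply: iff_trans (maximal_overE q_gt0 r_gt0 hN) _.
rewrite -[in X in _ = - X%:R](card_ord (2 * g)); apply: sumr_eqN_card => j.
by rewrite normrX normalized_norm // expr1n.
Qed.

Theorem mainTheorem1 (q g : nat) (alpha : 'I_(2 * g) -> algC) (N : nat -> nat)
  (hq : prime_power q) (hW : weil_numbers q alpha) (hN : zeta_counts q alpha N)
  (hss : supersingular q alpha)
  (k : 'I_(2 * g) -> nat) (t : 'I_(2 * g) -> int)
  (hk : forall j, (1 <= k j)%N)
  (hkt : forall j, coprimez (k j)%:Z (t j))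
  (hrep : forall j, normalized q alpha j = zeta (k j) ^ t j)
  (r : nat) (hr : (0 < r)%N) :
  maximal_over q g N r <->
  (exists (s : nat) (b : 'I_(2 * g) -> nat),
     [/\ (1 <= s)%N,
         (forall j, odd (b j)),
         (forall j, k j = (2 ^ s * b j)%N) &
         exists m : nat, odd m /\ r = (m * (2 ^ (s - 1) * \big[lcmn/1%N]_(j < 2 * g) b j))%N]).
Proof.
have q_gt0 : (0 < q)%N by case: hq => p [e [p_prime _ ->]]; rewrite expn_gt0 prime_gt0.
have w_prim j : (k j).-primitive_root (normalized q alpha j).
  by rewrite hrep; apply: prim_root_exprz (hkt j); apply: zeta_prim.
apply: iff_trans (maximal_over_exprN1 q_gt0 hr hW hN) _.
apply: iff_trans (double_ndvdn_family hr hk).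
by split=> w_N1 j; apply/(prim_root_expr_eqN1 r (w_prim j)).
Qed.
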